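(* Let $H$ be a finite simple graph on $n$ vertices, and let $KH_1,KH_2,\ldots,KH_s$ be the replication cliques of $H$ (in some chosen order), of sizes $y_1,\ldots,y_s\ge 1$. For $i=1,\ldots,s$ let $n_i$ denote the number of non-edges between a (any) vertex of $KH_i$ and the vertices of $KH_1\cup\cdots\cup KH_{i-1}$. Then $$\rho(H) \leq n+ \sum_{i=1}^s n_i.$$ Moreover, among all orderings of the replication cliques, the right-hand side is smallest when the ordering satisfies $y_1 \le y_2 \le \cdots \le y_s$.
   Context: All graphs are finite and simple. A coloring means a proper vertex coloring; an induced subgraph is rainbow if all its vertices have pairwise different colors. For a graph $H$, $\rho(H)$ is the least number $m$ such that there exists a graph $G$ on $m$ vertices such that every proper vertex coloring of $G$ contains a rainbow induced subgraph isomorphic to $H$. On $V(H)$ define $x\sim y$ iff $x=y$, or $xy$ is an edge of $H$ and $x,y$ have exactly the same neighbors in $H-\{x,y\}$; this is an equivalence relation whose classes are cliques, called the replication cliques of $H$. Since vertices in one replication clique have the same neighbors outside it, $n_i$ does not depend on the choice of vertex in $KH_i$. A non-edge is a pair of distinct non-adjacent vertices. *)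

From mathcomp Require Import all_boot.
Set Implicit Arguments. Unset Strict Implicit. Unset Printing Implicit Defensive.

Definition simple_graph (V : finType) (e : rel V) : Prop :=
  symmetric e /\ irreflexive e.

Definition proper_coloring (V : finType) (e : rel V) (c : V -> nat) : Prop :=
  forall u v, e u v -> c u <> c v.

(* Every proper coloring of G contains a rainbow induced subgraph isomorphic to H:
   an injective f : V(H) -> V(G) which is an induced embedding (preserves
   adjacency and non-adjacency) and whose image gets pairwise distinct colors. *)
Definition rainbow_forcing (T : finType) (e : rel T) (V : finType) (eG : rel V) : Prop :=
  forall c : V -> nat, proper_coloring eG c ->
    exists f : T -> V,
      injective f /\ (forall x y, eG (f x) (f y) = e x y) /\ injective (fun x => c (f x)).

(* "rho(H) <= N": since rho(H) is the LEAST m for which a graph G on m vertices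
   with the forcing property exists, rho(H) <= N iff such a graph exists on some
   m <= N vertices. *)
Definition rho_le (T : finType) (e : rel T) (N : nat) : Prop :=
  exists m, m <= N /\
    exists eG : rel 'I_m, simple_graph eG /\ rainbow_forcing e eG.

Definition repl (T : finType) (e : rel T) (x y : T) : bool :=
  (x == y) || (e x y && [forall z, ((z != x) && (z != y)) ==> (e x z == e y z)]).

Definition repl_class (T : finType) (e : rel T) (x : T) : {set T} :=
  [set y | repl e x y].

Definition repl_ordering (T : finType) (e : rel T) (cl : seq {set T}) : Prop :=
  uniq cl /\ (forall A, A \in cl <-> exists x, A = repl_class e x).

(* n_i (i is 0-based here): number of non-edges between a vertex x of KH_i
   (the one picked by [pick]) and the vertices of the earlier cliques. *)
Definition n_i (T : finType) (e : rel T) (cl : seq {set T}) (i : nat) : nat :=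
  match [pick x in nth set0 cl i] with
  | Some x => #|[set z in \bigcup_(j < i) nth set0 cl j | (z != x) && ~~ e x z]|
  | None => 0
  end.

Definition n_sum (T : finType) (e : rel T) (cl : seq {set T}) : nat :=
  \sum_(i < size cl) n_i e cl i.

From mathcomp Require Import all_boot.
Set Implicit Arguments. Unset Strict Implicit. Unset Printing Implicit Defensive.

(* Blow each replication clique KH_i of H up to a clique of y_i + n_i vertices,
   keeping the adjacencies between cliques; this graph G has n + sum n_i
   vertices.  Given a proper colouring of G, embed KH_1, KH_2, ... in turn into
   their blocks.  A block is a clique, hence rainbow; the n_i earlier vertices
   non-adjacent to KH_i block at most n_i of its colours, so y_i vertices with
   fresh colours remain, and earlier vertices adjacent to KH_i are adjacent to
   the whole block, so they differ in colour anyway.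
   For the optimality, n_i = sum of |KH_j| over the earlier cliques KH_j
   anticomplete to KH_i.  Always |KH_j| >= min(|KH_j|, |KH_i|), with equality
   for every pair when the sizes are sorted, and the sum of the symmetric weight
   min(|C|,|A|) [C, A anticomplete] over ordered pairs is half the sum over all
   pairs, whatever the order. *)

Lemma inj_in_of_leq_card (U V : finType) (v0 : V) (A : {set U}) (S : {set V}) :
  #|A| <= #|S| -> exists2 h : U -> V, {in A, forall x, h x \in S} & {in A &, injective h}.
Proof.
move=> AS; pose h x := nth v0 (enum S) (index x (enum A)).
have idx_lt x : x \in A -> index x (enum A) < size (enum S).
  by move=> Ax; rewrite -cardE (leq_trans _ AS) // cardE index_mem mem_enum.
exists h => [x Ax | x w Ax Aw /eqP]; first by rewrite -mem_enum mem_nth ?idx_lt.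
rewrite nth_uniq ?enum_uniq ?idx_lt // => /eqP E.
by rewrite -[x](nth_index x (s := enum A)) ?mem_enum // E nth_index ?mem_enum.
Qed.

Lemma card_colour_avoid (U W : finType) (a : U -> nat) (b : W -> nat)
    (B : {set U}) (F : {set W}) : {in B &, injective a} ->
  #|B| <= #|[set v in B | [forall z in F, b z != a v]]| + #|F|.
Proof.
move=> a_inj; set S := [set v in B | _].
have SB : S \subset B by apply/subsetP => v; rewrite inE => /andP[].
rewrite -(cardsID S B) (setIidPr SB) leq_add2l.
pose g v := [pick z in F | b z == a v].
have gF v : v \in B :\: S -> exists2 z, g v = Some z & (z \in F) && (b z == a v).
  rewrite !inE => /andP[/nandP[/negP//|/forall_inPn[z Fz /negPn bz]] _].
  by rewrite /g; case: pickP => [z' hit|/(_ z)]; [exists z' | rewrite Fz bz].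
rewrite -(card_in_imset (f := g)) => [|u v Su Sv].
  rewrite -(card_imset F Some_inj); apply: subset_leq_card.
  by apply/subsetP => _ /imsetP[v /gF[z -> /andP[Fz _]] ->]; rewrite imset_f.
have [z -> /andP[_ /eqP bu]] := gF u Su; have [z' -> /andP[_ /eqP bv]] := gF v Sv.
by move=> [zz']; apply: a_inj; rewrite ?(subsetP (subsetDl B S)) // -bu -bv zz'.
Qed.

Lemma card_ltn_partition (U : finType) (g : U -> nat) (P : pred U) i :
  #|[set z | (g z < i) && P z]| = \sum_(j < i) #|[set z | (g z == j) && P z]|.
Proof.
elim: i => [|i IH]; first by rewrite big_ord0; apply: eq_card0 => z; rewrite inE.
rewrite big_ord_recr /= -IH -(cardsID [set z | g z < i]).
by congr (_ + _); apply: eq_card => z; rewrite !inE ltnS;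
  case: (ltngtP (g z) i); rewrite ?andbT ?andbF.
Qed.

Lemma rho_le_of_forcing (T V : finType) (e : rel T) (eG : rel V) N :
  simple_graph eG -> rainbow_forcing e eG -> #|V| <= N -> rho_le e N.
Proof.
move=> [eG_sym eG_irr] eG_forcing VN; exists #|V|; split => //.
exists (fun i j => eG (enum_val i) (enum_val j)); split.
  by split => [i j|i]; [exact: eG_sym | exact: eG_irr].
move=> c c_proper.
have [|f [f_inj [f_ind cf_inj]]] := eG_forcing (fun v => c (enum_rank v)).
  by move=> u v uv; apply: c_proper; rewrite !enum_rankK.
exists (fun x => enum_rank (f x)); split => [x y /enum_rank_inj /f_inj //|].
by split=> // x y; rewrite !enum_rankK.
Qed.

Section BeforeSum.
Variable X : eqType.
Implicit Types (l : seq X) (m : X -> X -> nat).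

Definition before_sum l m :=
  \sum_(A <- l) \sum_(C <- l) (index C l < index A l) * m C A.

Lemma before_sum_nth x0 l m : uniq l ->
  before_sum l m = \sum_(i < size l) \sum_(j < i) m (nth x0 l j) (nth x0 l i).
Proof.
move=> l_uniq; rewrite /before_sum (big_nth x0) big_mkord; apply: eq_bigr => i _.
rewrite (big_nth x0) big_mkord.
rewrite (big_ord_widen _ (fun j => m (nth x0 l j) (nth x0 l i)) (ltnW (ltn_ord i))).
rewrite [RHS]big_mkcond; apply: eq_bigr => j _.
by rewrite !index_uniq //; case: (j < i); rewrite ?mul1n ?mul0n.
Qed.

Lemma leq_before_sum l m1 m2 : (forall C A, m1 C A <= m2 C A) ->
  before_sum l m1 <= before_sum l m2.
Proof. by move=> le_m; do 2![apply: leq_sum => ? _]; rewrite leq_mul. Qed.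

Lemma before_sum_double l m : uniq l -> (forall C A, m C A = m A C) ->
  before_sum l m + before_sum l m = \sum_(A <- l) \sum_(C <- l) (C != A) * m C A.
Proof.
move=> l_uniq m_sym; rewrite {2}/before_sum exchange_big -big_split /=.
apply: eq_big_seq => A lA; rewrite -big_split; apply: eq_big_seq => C lC /=.
have [->|C_A] := eqVneq C A; first by rewrite ltnn.
have : index C l != index A l by apply: contra_neq C_A => /index_inj; apply.
by rewrite (m_sym A); case: ltngtP; rewrite ?addn0.
Qed.

Lemma before_sum_perm l l' m : uniq l -> perm_eq l l' -> (forall C A, m C A = m A C) ->
  before_sum l m = before_sum l' m.
Proof.
move=> l_uniq ll' m_sym; apply: double_inj; rewrite -!addnn.
rewrite !before_sum_double // -?(perm_uniq ll') // (perm_big _ ll').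
by apply: eq_bigr => A _; apply: perm_big.
Qed.

Lemma before_sum_sorted (f : X -> nat) l m : uniq l ->
  sorted (fun A B => f A <= f B) l ->
  before_sum l (fun C A => f C * m C A) =
  before_sum l (fun C A => minn (f C) (f A) * m C A).
Proof.
move=> l_uniq l_sorted; apply: eq_big_seq => A lA; apply: eq_big_seq => C lC.
case: ltnP => CA //; congr (_ * (_ * _)); apply/esym/minn_idPl.
have f_trans : transitive (fun A B => f A <= f B) by move=> ? ? ?; apply: leq_trans.
have := sorted_ltn_nth f_trans A l_sorted (index C l) (index A l).
by rewrite !inE !index_mem lC lA !nth_index //; apply.
Qed.

End BeforeSum.

Section Replication.
Variables (T : finType) (e : rel T).
Hypothesis e_sym : symmetric e.

Lemma repl_refl x : repl e x x.
Proof. by rewrite /repl eqxx. Qed.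

Lemma repl_edge x y : repl e x y -> x != y -> e x y.
Proof. by case/orP=> [/eqP->|/andP[]//]; rewrite eqxx. Qed.

Lemma repl_nbr x y z : repl e x y -> z != x -> z != y -> e x z = e y z.
Proof.
case/orP=> [/eqP->//|/andP[_ /forallP nbr_eq]] zx zy.
by have /implyP := nbr_eq z; rewrite zx zy => /(_ isT) /eqP.
Qed.

Lemma repl_sym x y : repl e x y -> repl e y x.
Proof.
move=> xy; have [<-|x_y] := eqVneq x y; first exact: repl_refl.
apply/orP; right; rewrite e_sym repl_edge //=.
apply/forallP=> z; apply/implyP=> /andP[zy zx].
by rewrite (repl_nbr xy) // eqxx.
Qed.

Lemma repl_euclid x y w : repl e x y -> repl e x w -> repl e y w.
Proof.
move=> xy xw.
have [<-|y_w] := eqVneq y w; first exact: repl_refl.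
have [yx|y_x] := eqVneq y x; first by rewrite yx.
have [wx|w_x] := eqVneq w x; first by rewrite wx; apply: repl_sym.
have exy : e x y by apply: repl_edge; rewrite // eq_sym.
have exw : e x w by apply: repl_edge; rewrite // eq_sym.
apply/orP; right; apply/andP; split; first by rewrite -(repl_nbr xy) // eq_sym.
apply/forallP=> z; apply/implyP=> /andP[zy zw].
have [->|z_x] := eqVneq z x; first by rewrite e_sym exy e_sym exw.
by rewrite -(repl_nbr xy) // (repl_nbr xw).
Qed.

Lemma repl_trans x y w : repl e x y -> repl e y w -> repl e x w.
Proof. by move=> /repl_sym; apply: repl_euclid. Qed.

Lemma repl_class_eq x y : repl e x y -> repl_class e x = repl_class e y.
Proof.
move=> xy; apply/setP=> z; rewrite !inE.
by apply/idP/idP; [apply: repl_trans (repl_sym xy) | apply: repl_trans xy].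
Qed.

Lemma repl_adj_eq x x' w w' : repl e x x' -> repl e w w' -> ~~ repl e x w ->
  e x w = e x' w'.
Proof.
move=> xx' ww' x_w.
have w_x : w != x by apply: contraNneq x_w => ->; apply: repl_refl.
have w_x' : w != x' by apply: contraNneq x_w => ->.
have x'_w' : x' != w'.
  by apply: contraNneq x_w => x'w'; apply: (repl_trans xx'); rewrite x'w' repl_sym.
by rewrite (repl_nbr xx') // e_sym (repl_nbr ww') // 1?eq_sym // e_sym.
Qed.

Definition anticomplete (C A : {set T}) := [forall c in C, forall a in A, ~~ e c a].

Lemma anticompleteC C A : anticomplete C A = anticomplete A C.
Proof.
by apply/forall_inP/forall_inP => anti a Aa; apply/forall_inP => c Cc;
  rewrite e_sym; apply: (forall_inP (anti c Cc)).
Qed.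

Lemma anticomplete_class x w : ~~ repl e x w ->
  anticomplete (repl_class e w) (repl_class e x) = ~~ e x w.
Proof.
move=> x_w; have w_x : ~~ repl e w x by apply: contra x_w; apply: repl_sym.
rewrite e_sym; apply/forall_inP/idP => [anti | e_wx c].
  by apply: (forall_inP (anti w _)); rewrite inE repl_refl.
rewrite inE => wc; apply/forall_inP => a; rewrite inE => xa.
by rewrite -(repl_adj_eq wc xa w_x).
Qed.

Section Ordering.
Variable cl : seq {set T}.
Hypothesis cl_ordering : repl_ordering e cl.

Definition class_idx x := index (repl_class e x) cl.

Lemma repl_class_in x : repl_class e x \in cl.
Proof. by apply/cl_ordering.2; exists x. Qed.

Lemma class_idx_lt x : class_idx x < size cl.
Proof. by rewrite index_mem repl_class_in. Qed.

Lemma nth_class_idx x : nth set0 cl (class_idx x) = repl_class e x.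
Proof. by rewrite nth_index // repl_class_in. Qed.

Lemma class_idx_eq x y : (class_idx x == class_idx y) = repl e x y.
Proof.
apply/idP/idP => [/eqP xy | /repl_class_eq xy]; last by rewrite /class_idx xy.
have : y \in repl_class e x by rewrite -nth_class_idx xy nth_class_idx inE repl_refl.
by rewrite inE.
Qed.

Lemma nth_cl_class i : i < size cl -> exists x, nth set0 cl i = repl_class e x.
Proof. by move=> i_lt; apply/cl_ordering.2; rewrite mem_nth. Qed.

Lemma mem_nth_cl i z : i < size cl -> (z \in nth set0 cl i) = (class_idx z == i).
Proof.
move=> i_lt; have [x clx] := nth_cl_class i_lt.
have <- : class_idx x = i by rewrite /class_idx -clx index_uniq // cl_ordering.1.
by rewrite nth_class_idx inE eq_sym class_idx_eq.
Qed.

Lemma pick_nth_cl i : i < size cl ->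
  exists2 p, [pick x in nth set0 cl i] = Some p & class_idx p = i.
Proof.
move=> i_lt; case: pickP => [p | empty]; first by rewrite mem_nth_cl // => /eqP; exists p.
have [x clx] := nth_cl_class i_lt.
by have := empty x; rewrite clx inE repl_refl.
Qed.

Lemma mem_bigcup_prefix i z : i <= size cl ->
  (z \in \bigcup_(j < i) nth set0 cl j) = (class_idx z < i).
Proof.
move=> i_le; apply/bigcupP/idP => [[j _] | z_lt].
  by rewrite mem_nth_cl ?(leq_trans (ltn_ord j)) // => /eqP->.
by exists (Ordinal z_lt); rewrite // mem_nth_cl ?(leq_trans z_lt) //=.
Qed.

Lemma n_iE i p : class_idx p = i ->
  n_i e cl i = #|[set z | (class_idx z < i) && ~~ e p z]|.
Proof.
move=> p_i; have i_lt : i < size cl by rewrite -p_i class_idx_lt.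
have [q q_pick q_i] := pick_nth_cl i_lt; rewrite /n_i q_pick; apply: eq_card => z.
rewrite !inE mem_bigcup_prefix ?(ltnW i_lt) //.
case: ltnP => [z_lt|//].
have z_q : z != q by apply: contraTneq z_lt => ->; rewrite q_i ltnn.
rewrite z_q (@repl_adj_eq q p z z) ?repl_refl //.
  by rewrite -class_idx_eq p_i q_i.
by rewrite -class_idx_eq q_i neq_ltn z_lt orbT.
Qed.

Lemma n_i_anticomplete i : i < size cl ->
  n_i e cl i = \sum_(j < i) #|nth set0 cl j| * anticomplete (nth set0 cl j) (nth set0 cl i).
Proof.
move=> /pick_nth_cl[p _ <-].
rewrite (n_iE (erefl _)) card_ltn_partition nth_class_idx; apply: eq_bigr => j _.
have [w _ w_j] := pick_nth_cl (ltn_trans (ltn_ord j) (class_idx_lt p)).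
have p_w : ~~ repl e p w by rewrite -class_idx_eq w_j neq_ltn ltn_ord orbT.
rewrite -w_j nth_class_idx anticomplete_class //.
have class_w z : (class_idx z == class_idx w) = (z \in repl_class e w).
  by rewrite inE eq_sym class_idx_eq.
case: (boolP (e p w)) => e_pw; [rewrite muln0 | rewrite muln1];
  [apply: eq_card0 | apply: eq_card] => z; rewrite inE class_w;
  case: (boolP (z \in repl_class e w)) => //= wz;
  by rewrite inE in wz; rewrite -(repl_adj_eq (repl_refl p) wz p_w) e_pw.
Qed.

Lemma n_sum_before :
  n_sum e cl = before_sum cl (fun C A => #|C| * anticomplete C A).
Proof.
rewrite (before_sum_nth set0) ?cl_ordering.1 //.
by apply: eq_bigr => i _; apply: n_i_anticomplete.
Qed.

Section Blowup.
Hypothesis e_irr : irreflexive e.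

Definition extra_at (i : 'I_(size cl)) := 'I_(n_i e cl i).
Definition blowup_extra := {i : 'I_(size cl) & extra_at i}.
Definition blowup := (T + blowup_extra)%type.

Definition vclass (v : blowup) : nat :=
  match v with inl x => class_idx x | inr t => tag t end.

Definition class_adj (i j : nat) : bool :=
  if ([pick x in nth set0 cl i], [pick x in nth set0 cl j]) is (Some a, Some b)
  then e a b else false.

Definition blowup_rel : rel blowup :=
  fun u v => (u != v) && ((vclass u == vclass v) || class_adj (vclass u) (vclass v)).

Definition block k := [set v | vclass v == k].

Lemma card_blowup : #|{: blowup}| = #|T| + n_sum e cl.
Proof.
rewrite card_sum; congr (_ + _).
by rewrite card_tagged sumnE big_map big_enum; apply: eq_bigr => i _; rewrite card_ord.
Qed.

Lemma blowup_simple : simple_graph blowup_rel.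
Proof.
split=> [u v|u]; last by rewrite /blowup_rel eqxx.
rewrite /blowup_rel eq_sym [vclass u == _]eq_sym /class_adj.
by do 2!case: pickP => [? _|_] //=; rewrite e_sym.
Qed.

Lemma class_adj_idx x w : ~~ repl e x w -> class_adj (class_idx x) (class_idx w) = e x w.
Proof.
move=> x_w; have [a a_pick a_x] := pick_nth_cl (class_idx_lt x).
have [b b_pick b_w] := pick_nth_cl (class_idx_lt w).
by rewrite /class_adj a_pick b_pick (@repl_adj_eq x a w b) // -class_idx_eq ?a_x ?b_w.
Qed.

Lemma blowup_relE u v x w : u != v -> vclass u = class_idx x -> vclass v = class_idx w ->
  x != w -> blowup_rel u v = e x w.
Proof.
rewrite /blowup_rel => -> -> -> x_w; rewrite class_idx_eq /=.
by case: (boolP (repl e x w)) => [/repl_edge->|/class_adj_idx].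
Qed.

Lemma leq_card_block k : k < size cl -> #|nth set0 cl k| + n_i e cl k <= #|block k|.
Proof.
move=> k_lt; pose kk := Ordinal k_lt.
pose L : {set blowup} := inl @: nth set0 cl k.
pose R : {set blowup} :=
  [set inr (Tagged extra_at j) | j : extra_at kk].
have card_L : #|L| = #|nth set0 cl k| by rewrite card_imset // => ? ? [].
have card_R : #|R| = n_i e cl k.
  rewrite card_imset ?card_ord // => a b [] /(congr1 (tagged_as (Tagged extra_at a))).
  by rewrite !tagged_asE.
have LR : L :&: R = set0.
  by apply/setP => v; rewrite !inE; apply/andP => -[/imsetP[? _ ->] /imsetP[? _]].
rewrite -card_L -card_R -cardsUI LR cards0 addn0 subset_leq_card //.
apply/subsetP => v; rewrite !inE => /orP[/imsetP[x] | /imsetP[j _ ->] //].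
by rewrite mem_nth_cl // => kx ->.
Qed.

Lemma block_clique k u v : u \in block k -> v \in block k -> u != v -> blowup_rel u v.
Proof. by rewrite !inE /blowup_rel => /eqP-> /eqP-> ->; rewrite eqxx. Qed.

Section Greedy.
Variable c : blowup -> nat.
Hypothesis c_proper : proper_coloring blowup_rel c.

Lemma block_colour_inj k : {in block k &, injective c}.
Proof.
move=> u v Bu Bv cuv; apply/eqP; apply: contraT => u_v.
by have := c_proper (block_clique Bu Bv u_v); rewrite cuv.
Qed.

Definition greedy_inv k (f : T -> blowup) :=
  (forall x, class_idx x < k -> vclass (f x) = class_idx x) /\
  {in [pred x | class_idx x < k] &, injective (c \o f)}.

Lemma greedy_step k f : k < size cl -> greedy_inv k f -> exists f', greedy_inv k.+1 f'.
Proof.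
move=> k_lt [f_class cf_inj]; have [p _ p_k] := pick_nth_cl k_lt.
pose forbidden := [set z | (class_idx z < k) && ~~ e p z].
pose S := [set v in block k | [forall z in forbidden, c (f z) != c v]].
have card_S : #|nth set0 cl k| <= #|S|.
  rewrite -(leq_add2r (n_i e cl k)) (leq_trans (leq_card_block k_lt)) //.
  by rewrite (n_iE p_k) card_colour_avoid //; apply: block_colour_inj.
have [h hS h_inj] := inj_in_of_leq_card (inl p) card_S.
have hSk x : class_idx x = k -> h x \in S by move=> x_k; apply: hS; rewrite mem_nth_cl ?x_k.
have h_block x : class_idx x = k -> h x \in block k.
  by move/hSk; rewrite inE => /andP[].
have fresh x w : class_idx x = k -> class_idx w < k -> c (h x) != c (f w).
  move=> x_k w_lt; move: (hSk x x_k); rewrite inE => /andP[_ /forall_inP avoid].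
  have [/avoid | nFw] := boolP (w \in forbidden); first by rewrite eq_sym.
  have hx_class : vclass (h x) = class_idx x.
    by have := h_block x x_k; rewrite inE x_k => /eqP.
  have w_x : class_idx w != class_idx x by rewrite x_k ltn_eqF.
  apply/eqP/c_proper; rewrite (blowup_relE _ hx_class (f_class w w_lt)).
  - rewrite inE w_lt negbK in nFw.
    rewrite -(@repl_adj_eq p x w w) ?repl_refl -?class_idx_eq ?p_k ?x_k //.
    by rewrite eq_sym ltn_eqF.
  - by apply: contra_neq w_x => hx_fw; rewrite -(f_class w w_lt) -hx_fw hx_class.
  - by apply: contra_neq w_x => ->.
exists (fun x => if class_idx x == k then h x else f x); split.
  move=> x; rewrite ltnS leq_eqVlt => /orP[/eqP x_k | x_lt].
    by have := h_block x x_k; rewrite x_k eqxx inE => /eqP.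
  by rewrite ltn_eqF // f_class.
move=> x w; rewrite !inE !ltnS (leq_eqVlt (class_idx x)) (leq_eqVlt (class_idx w)) /=.
move=> /orP[/eqP x_k | x_lt] /orP[/eqP w_k | w_lt].
- rewrite x_k w_k eqxx => /(block_colour_inj (h_block x x_k) (h_block w w_k)).
  by apply: h_inj; rewrite mem_nth_cl ?x_k ?w_k.
- by rewrite x_k eqxx (ltn_eqF w_lt) => /eqP; rewrite (negbTE (fresh x w x_k w_lt)).
- by rewrite w_k eqxx (ltn_eqF x_lt) => /esym/eqP; rewrite (negbTE (fresh w x w_k x_lt)).
- by rewrite !ltn_eqF //; apply: cf_inj.
Qed.

Lemma greedy_exists k : k <= size cl -> exists f, greedy_inv k f.
Proof.
elim: k => [_|k IH k_lt]; first by exists inl; split=> x; rewrite ?inE ltn0.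
by have [f f_inv] := IH (ltnW k_lt); apply: greedy_step f_inv.
Qed.

End Greedy.

Lemma blowup_forcing : rainbow_forcing e blowup_rel.
Proof.
move=> c c_proper; have [f [f_class cf_inj]] := greedy_exists c_proper (leqnn _).
have {}f_class x : vclass (f x) = class_idx x by apply/f_class/class_idx_lt.
have {}cf_inj : injective (c \o f) by move=> x w; apply: cf_inj; rewrite inE class_idx_lt.
have f_inj : injective f by move=> x w /(congr1 c) /cf_inj.
exists f; split=> //; split=> // x w.
have [<-|x_w] := eqVneq x w; first by rewrite /blowup_rel eqxx e_irr.
by rewrite (blowup_relE _ (f_class x) (f_class w)) // (inj_eq f_inj).
Qed.

End Blowup.
End Ordering.

Lemma repl_ordering_perm cl cl' : repl_ordering e cl -> repl_ordering e cl' ->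
  perm_eq cl cl'.
Proof.
move=> [cl_uniq cl_classes] [cl'_uniq cl'_classes]; apply: uniq_perm => // A.
by apply/idP/idP => [/cl_classes/cl'_classes | /cl'_classes/cl_classes].
Qed.

Lemma n_sum_sorted_min cl cl' : repl_ordering e cl ->
  sorted (fun A B : {set T} => #|A| <= #|B|) cl -> repl_ordering e cl' ->
  n_sum e cl <= n_sum e cl'.
Proof.
move=> cl_ord cl_sorted cl'_ord.
have min_sym (C A : {set T}) :
    minn #|C| #|A| * anticomplete C A = minn #|A| #|C| * anticomplete A C.
  by rewrite minnC anticompleteC.
rewrite (n_sum_before cl_ord) (n_sum_before cl'_ord) before_sum_sorted ?cl_ord.1 //.
rewrite (before_sum_perm cl_ord.1 (repl_ordering_perm cl_ord cl'_ord) min_sym).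
by apply: leq_before_sum => C A; rewrite leq_mul ?geq_minl.
Qed.

End Replication.

Theorem theorem3p1 (T : finType) (e : rel T) (He : simple_graph e)
    (cl : seq {set T}) (Hcl : repl_ordering e cl) :
  rho_le e (#|T| + n_sum e cl) /\
  (sorted (fun A B : {set T} => #|A| <= #|B|) cl ->
     forall cl' : seq {set T}, repl_ordering e cl' -> n_sum e cl <= n_sum e cl').
Proof.
have [e_sym e_irr] := He; split.
  apply: (rho_le_of_forcing (blowup_simple e_sym cl) (blowup_forcing e_sym Hcl e_irr)).
  by rewrite card_blowup.
by move=> cl_sorted cl'; exact: (n_sum_sorted_min e_sym Hcl cl_sorted).
Qed.
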